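(* Let $h:\mathbb{R}\to\mathbb{R}$ satisfy $(h(x)-ax)(h(x)-bx)\le0$ for all $x\in\mathbb{R}$, where $b>a>0$, and let $N:\mathcal{L}_{2e+}^1\to\mathcal{L}_{2e+}^1$ be the static system $(Nu)(t)=h(u(t))$. Then $$\theta(N)\le\arccos\frac{2\sqrt{ab}}{a+b}.$$
   Context: $\mathcal{L}_2^1$ is the set of measurable $u:\mathbb{R}\to\mathbb{R}$ with $\|u\|_2^2=\int|u(t)|^2dt<\infty$, inner product $\langle u,v\rangle=\int u(t)v(t)\,dt$; $\mathcal{L}_{2+}=\{u\in\mathcal{L}_2:u(t)=0\ \text{for}\ t<0\}$; for $T\ge0$, $(\Gamma_Tu)(t)=u(t)$ for $t\le T$, $0$ for $t>T$; $\mathcal{L}_{2e+}=\{u:\Gamma_Tu\in\mathcal{L}_{2+}\ \forall T\ge0\}$. For a causal stable system $P$ (i.e. $\Gamma_TP=\Gamma_TP\Gamma_T$, $P$ maps $\mathcal{L}_{2+}$ to $\mathcal{L}_{2+}$ with finite gain $\sup_{0\ne u\in\mathcal{L}_{2+}}\|Pu\|_2/\|u\|_2$), the singular angle $\theta(P)\in[0,\pi]$ is given by $\cos\theta(P)=\inf\{\langle u,Pu\rangle/(\|u\|_2\|Pu\|_2):0\neq u\in\mathcal{L}_{2+},\ Pu\ne0\}$. *)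

From HB Require Import structures.
From mathcomp Require Import all_boot all_order all_algebra.
From mathcomp Require Import all_classical all_reals all_analysis.
Set Implicit Arguments. Unset Strict Implicit. Unset Printing Implicit Defensive.
Import Order.TTheory GRing.Theory Num.Theory.
Local Open Scope classical_set_scope.
Local Open Scope ring_scope.

Definition leb (R : realType) := (@lebesgue_measure R).

Definition inL2 (R : realType) (u : R -> R) : Prop :=
  measurable_fun setT u /\
  (@leb R).-integrable setT (fun t => ((u t) ^+ 2)%:E).

Definition inL2p (R : realType) (u : R -> R) : Prop :=
  inL2 u /\ (forall t : R, t < 0 -> u t = 0).

Definition ip (R : realType) (u v : R -> R) : R :=
  Rintegral (@leb R) setT (fun t => u t * v t).

Definition norm2 (R : realType) (u : R -> R) : R := Num.sqrt (ip u u).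

(* the set of ratios <u,Pu>/(||u|| ||Pu||) over 0 <> u in L_{2+}, Pu <> 0
   (nonzero as elements of L_2, i.e. nonzero norm) *)
Definition angle_ratios (R : realType) (P : (R -> R) -> (R -> R)) : set R :=
  [set r | exists u : R -> R,
     [/\ inL2p u, norm2 u != 0, norm2 (P u) != 0 &
         r = ip u (P u) / (norm2 u * norm2 (P u))]].

Definition singular_angle (R : realType) (P : (R -> R) -> (R -> R)) : R :=
  acos (inf (angle_ratios P)).

Definition static_sys (R : realType) (h : R -> R) : (R -> R) -> (R -> R) :=
  fun u t => h (u t).

From HB Require Import structures.
From mathcomp Require Import all_boot all_order all_algebra.
From mathcomp Require Import all_classical all_reals all_analysis.
From mathcomp Require Import ring lra measurable_realfun.
Set Implicit Arguments. Unset Strict Implicit. Unset Printing Implicit Defensive.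
Import Order.TTheory GRing.Theory Num.Theory.
Local Open Scope classical_set_scope.
Local Open Scope ring_scope.

(* Expanding the sector condition gives h(x)^2 + ab x^2 <= (a + b) x h(x) pointwise;
   integrated along u it reads |Nu|^2 + ab |u|^2 <= (a + b) <u, Nu>, and AM-GM bounds
   the left-hand side below by 2 sqrt(ab) |u| |Nu|.  So 2 sqrt(ab) / (a + b) is a lower
   bound of the ratios, and acos is decreasing.  The indicator of [0, 1] has ratio 1,
   which keeps the infimum inside [-1, 1]: the infimum of an empty set would be a junk
   value. *)

Section Sector.
Variables (R : realType) (a b x y : R).

Lemma sector_quadratic_le : (y - a * x) * (y - b * x) <= 0 ->
  y ^+ 2 + a * b * x ^+ 2 <= (a + b) * (x * y).
Proof.
move=> hxy; rewrite -subr_ge0.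
have -> : (a + b) * (x * y) - (y ^+ 2 + a * b * x ^+ 2) =
  - ((y - a * x) * (y - b * x)) by ring.
by rewrite oppr_ge0.
Qed.

Lemma sector_mul_ge0 : 0 < a -> 0 < b -> (y - a * x) * (y - b * x) <= 0 ->
  0 <= x * y.
Proof.
move=> ha hb /sector_quadratic_le hq.
have := sqr_ge0 x; have := sqr_ge0 y; have := mulr_gt0 ha hb; nra.
Qed.

Lemma sector_mul_le : a < b -> (y - a * x) * (y - b * x) <= 0 ->
  x * y <= b * x ^+ 2.
Proof.
move=> hab hxy.
have : (b - a) * (x * (b * x - y)) =
  (b * x - y) ^+ 2 - (y - a * x) * (y - b * x) by ring.
have := sqr_ge0 (b * x - y); nra.
Qed.

Lemma sector_sqr_le : 0 <= a + b -> a < b -> (y - a * x) * (y - b * x) <= 0 ->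
  y ^+ 2 <= b ^+ 2 * x ^+ 2.
Proof.
move=> hapb hab hxy.
have := sector_quadratic_le hxy; have := sector_mul_le hab hxy; nra.
Qed.

End Sector.

Lemma amgm_ratio_ge (R : realType) (a b A B P : R) :
  0 < a -> 0 < b -> 0 < A -> 0 < B -> B + a * b * A <= (a + b) * P ->
  2 * Num.sqrt (a * b) / (a + b) <= P / (Num.sqrt A * Num.sqrt B).
Proof.
move=> ha hb hA hB hP.
have apb : 0 < a + b by rewrite addr_gt0.
have sAB : 0 < Num.sqrt A * Num.sqrt B by rewrite mulr_gt0 ?sqrtr_gt0.
rewrite ler_pdivlMr // mulrAC ler_pdivrMr //.
rewrite [P * _]mulrC; apply: le_trans hP.
have := sqr_ge0 (Num.sqrt B - Num.sqrt (a * b) * Num.sqrt A).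
rewrite sqrrB exprMn !sqr_sqrtr ?(ltW hA) ?(ltW hB) ?mulr_ge0 ?(ltW ha) ?(ltW hb) //.
lra.
Qed.

Lemma le_acos (R : realType) (x y : R) : -1 <= x -> x <= y -> y <= 1 ->
  acos y <= acos x.
Proof.
move=> hx1 hxy hy1.
have hx : -1 <= x <= 1 by rewrite hx1 (le_trans hxy hy1).
have hy : -1 <= y <= 1 by rewrite hy1 (le_trans hx1 hxy).
have ix : acos x \in `[0, pi] by rewrite in_itv /= acos_ge0 // acos_lepi.
have iy : acos y \in `[0, pi] by rewrite in_itv /= acos_ge0 // acos_lepi.
rewrite leNgt -(ltr_cos ix iy) !acosK ?in_itv //.
by rewrite ltNge hxy.
Qed.

Lemma integrable_sqr_dominated (R : realType) (u f : R -> R) (k : R) :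
  inL2 u -> measurable_fun setT f -> (forall t, `|f t| <= k * u t ^+ 2) ->
  (@leb R).-integrable setT (EFin \o f).
Proof.
move=> [_ iu] mf hf.
apply: (le_integrable measurableT _ _ (integrableZl measurableT k iu)).
  exact/measurable_EFinP.
by move=> t _; rewrite lee_fin (le_trans (hf t)) ?ler_norm.
Qed.

Section StaticSector.
Variables (R : realType) (a b : R) (h : R -> R).
Hypotheses (ha : 0 < a) (hab : a < b) (hmeas : measurable_fun setT h).
Hypothesis hsec : forall x, (h x - a * x) * (h x - b * x) <= 0.

Let N := static_sys h.

Lemma static_sys_sector_ip u : inL2 u ->
  ip (N u) (N u) + a * b * ip u u <= (a + b) * ip u (N u).
Proof.
move=> uL2; have [mu _] := uL2.
have hb : 0 < b := lt_trans ha hab.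
have apb : 0 < a + b := addr_gt0 ha hb.
have mNu : measurable_fun setT (N u) by exact: measurableT_comp.
have iuu : (@leb R).-integrable setT (EFin \o (fun t => u t * u t)).
  apply: (integrable_sqr_dominated (k := 1) uL2); first exact: measurable_funM.
  by move=> t; rewrite mul1r -expr2 ger0_norm ?sqr_ge0.
have iNN : (@leb R).-integrable setT (EFin \o (fun t => N u t * N u t)).
  apply: (integrable_sqr_dominated (k := b ^+ 2) uL2); first exact: measurable_funM.
  move=> t; rewrite -expr2 ger0_norm ?sqr_ge0 //.
  exact: sector_sqr_le (ltW apb) hab (hsec _).
have iuN : (@leb R).-integrable setT (EFin \o (fun t => u t * N u t)).
  apply: (integrable_sqr_dominated (k := b) uL2); first exact: measurable_funM.
  move=> t; rewrite ger0_norm; first exact: sector_mul_le hab (hsec _).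
  exact: sector_mul_ge0 ha hb (hsec _).
have iQ : (@leb R).-integrable setT (EFin \o (fun t => a * b * (u t * u t))) :=
  integrableZl measurableT (a * b) iuu.
have iP : (@leb R).-integrable setT (EFin \o (fun t => (a + b) * (u t * N u t))) :=
  integrableZl measurableT (a + b) iuN.
rewrite /ip -(RintegralZl _ measurableT iuu) -[X in _ <= X](RintegralZl _ measurableT iuN).
rewrite -RintegralD //; apply: le_Rintegral => //.
- exact (integrableD measurableT iNN iQ).
- by move=> t _; rewrite -!expr2; exact: sector_quadratic_le (hsec _).
Qed.

Lemma static_sys_ratios_lbound :
  lbound (angle_ratios N) (2 * Num.sqrt (a * b) / (a + b)).
Proof.
move=> _ [u [[uL2 _] + + ->]]; rewrite /norm2 !sqrtr_eq0 -!ltNge => uu0 NN0.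
apply: amgm_ratio_ge => //; first exact: lt_trans ha hab.
exact: static_sys_sector_ip.
Qed.

End StaticSector.

Lemma Rintegral_indic01 (R : realType) (g : R -> R) : g 0 = 0 ->
  Rintegral (@leb R) setT (fun t => g (\1_(`[0, 1]) t)) = g 1.
Proof.
move=> g0.
have -> : (fun t : R => g (\1_(`[0, 1]) t)) = (fun t => g 1 * \1_(`[0, 1]) t).
  by apply: funext => t; rewrite indicE; case: (_ \in _); rewrite ?g0 ?mulr0 ?mulr1.
rewrite RintegralZl //; last exact: integrable_indic_itv.
rewrite /Rintegral integral_indic // setIT /leb.
have := @lebesgue_measure_itv R `[0, 1]; rewrite /= lte01 oppr0 adde0 => ->.
by rewrite mulr1.
Qed.

Lemma inL2p_indic01 (R : realType) : inL2p (\1_(`[0, 1]) : R -> R).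
Proof.
split; last by move=> t t0; rewrite indicE memNset //= in_itv /= leNgt t0.
split; first exact: measurable_indic.
have -> : (fun t => (\1_(`[0, 1]) t ^+ 2)%:E) = EFin \o (\1_(`[0, 1]) : R -> R).
  by apply: funext => t; rewrite /= indicE; case: (_ \in _); rewrite ?expr0n ?expr1n.
exact: integrable_indic_itv.
Qed.

Lemma static_sys_ratio_indic01 (R : realType) (h : R -> R) :
  h 0 = 0 -> 0 < h 1 -> angle_ratios (static_sys h) 1.
Proof.
move=> h0 h1; pose u : R -> R := \1_(`[0, 1]).
have nu : norm2 u = 1.
  by rewrite /norm2 /ip (Rintegral_indic01 (g := fun x => x * x)) ?mulr0 // mulr1 sqrtr1.
have nNu : norm2 (static_sys h u) = h 1.
  rewrite /norm2 /ip (Rintegral_indic01 (g := fun x => h x * h x)) ?h0 ?mulr0 //.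
  by rewrite -expr2 sqrtr_sqr gtr0_norm.
have ip1 : ip u (static_sys h u) = h 1.
  by rewrite /ip (Rintegral_indic01 (g := fun x => x * h x)) ?mul0r // mul1r.
exists u; split; first exact: inL2p_indic01.
- by rewrite nu oner_neq0.
- by rewrite nNu gt_eqF.
- by rewrite nu nNu ip1 mul1r divff // gt_eqF.
Qed.

Theorem proposition5 (R : realType) (a b : R) (h : R -> R)
  (ha : 0 < a) (hab : a < b)
  (hmeas : measurable_fun [set: R] h)
  (hsec : forall x : R, (h x - a * x) * (h x - b * x) <= 0) :
  singular_angle (static_sys h) <= acos (2 * Num.sqrt (a * b) / (a + b)).
Proof.
have hb : 0 < b := lt_trans ha hab.
have h0 : h 0 = 0.
  apply/eqP; rewrite -sqrf_eq0 eq_le sqr_ge0 andbT expr2.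
  by have := hsec 0; rewrite !mulr0 !subr0.
have h1 : 0 < h 1.
  have := sector_quadratic_le (hsec 1); rewrite expr1n !mulr1 mul1r.
  have := sqr_ge0 (h 1); have := mulr_gt0 ha hb; nra.
have ratio1 := static_sys_ratio_indic01 h0 h1.
have lb := static_sys_ratios_lbound ha hab hmeas hsec.
rewrite /singular_angle; apply: le_acos.
- apply: le_trans (_ : 0 <= _); first by rewrite lerN10.
  by rewrite divr_ge0 ?mulr_ge0 ?sqrtr_ge0 // ltW // addr_gt0.
- exact: lb_le_inf (ex_intro _ 1 ratio1) lb.
- exact: ge_inf (ex_intro _ _ lb) _ ratio1.
Qed.
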